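(* Let $R$ be a countable, cotorsion-free commutative ring. Let $G$ be an almost full embedding of a category of graphs into a category of torsion-free $R$-modules, i.e. a functor such that for all graphs $X,Y$ in its domain the map $\gamma:R[\mathrm{Hom}_{\mathcal{G}raphs}(X,Y)]\to\mathrm{Hom}_R(GX,GY)$, $\sum r_\varphi\varphi\mapsto\sum r_\varphi G\varphi$, is an isomorphism. If $\mathrm{Hom}_{\mathcal{G}raphs}(X,Y)$ is uncountable, then $GX$ or $GY$ is uncountable.
   Context: A graph is a set with a binary relation; graph morphisms are relation-preserving functions. $R[S]$ denotes the free $R$-module with basis $S$. An $R$-module is torsion-free if $bs=0$ with $s\ne0$ implies $b=0$. Cotorsion-free is with respect to a countable multiplicative subset $\mathbb{S}\subseteq R$ ($0\notin\mathbb{S}$, $1\in\mathbb{S}$): $R$ is $\mathbb{S}$-reduced ($\bigcap_{s\in\mathbb{S}}sR=0$), $\mathbb{S}$-torsion-free, and $\mathrm{Hom}_R(\widehat R,R)=0$ for the $\mathbb{S}$-adic completion $\widehat R$. *)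

From HB Require Import structures.
From mathcomp Require Import all_boot all_algebra.
Set Implicit Arguments. Unset Strict Implicit. Unset Printing Implicit Defensive.
Import GRing.Theory.
Local Open Scope ring_scope.

Definition countable (T : Type) : Prop := exists f : T -> nat, injective f.

Section Cotorsion.
Variable R : comNzRingType.
Variable S : R -> Prop.

Definition in_sR (s x : R) : Prop := exists t, x = s * t.

Definition mult_subset : Prop :=
  ~ S 0 /\ S 1 /\ (forall s t, S s -> S t -> S (s * t)).

Definition S_reduced : Prop := forall r, (forall s, S s -> in_sR s r) -> r = 0.

Definition S_torsion_free : Prop := forall s r, S s -> s * r = 0 -> r = 0.

(* The S-adic completion  \hat R = lim_{s in S} R/sR  (S directed by divisibility):
   an element is represented by a compatible family x : (s in S) |-> x s,
   i.e. x t = x s mod sR whenever s | t; two families represent the same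
   element iff x s = y s mod sR for all s in S. *)
Definition compl_family (x : R -> R) : Prop :=
  forall s t, S s -> S t -> in_sR s t -> in_sR s (x t - x s).

Definition compl_equiv (x y : R -> R) : Prop :=
  forall s, S s -> in_sR s (x s - y s).

Definition hom_completion (f : (R -> R) -> R) : Prop :=
  (forall x y, compl_family x -> compl_family y -> compl_equiv x y -> f x = f y) /\
  (forall x y, compl_family x -> compl_family y ->
     f (fun r => x r + y r) = f x + f y) /\
  (forall a x, compl_family x -> f (fun r => a * x r) = a * f x).

Definition hom_completion_zero : Prop :=
  forall f, hom_completion f -> forall x, compl_family x -> f x = 0.

Definition cotorsion_free : Prop :=
  mult_subset /\ countable {r : R | S r} /\
  S_reduced /\ S_torsion_free /\ hom_completion_zero.

Definition torsion_free_mod (M : lmodType R) : Prop :=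
  forall (b : R) (s : M), b *: s = 0 -> s <> 0 -> b = 0.

End Cotorsion.

(* Graphs: a carrier with a binary relation; morphisms preserve the relation. *)
Record ghom (V W : Type) (E : V -> V -> Prop) (F : W -> W -> Prop) := GHom {
  ghom_fun :> V -> W;
  ghom_prop : forall x y, E x y -> F (ghom_fun x) (ghom_fun y) }.

Definition ghom_id (V : Type) (E : V -> V -> Prop) : ghom E E :=
  @GHom V V E E id (fun x y h => h).

Definition ghom_comp (U V W : Type) (E : U -> U -> Prop) (F : V -> V -> Prop)
  (H : W -> W -> Prop) (g : ghom F H) (f : ghom E F) : ghom E H :=
  @GHom U W E H (fun x => g (f x))
    (fun x y h => ghom_prop g (ghom_prop f h)).

Section Functor.
Variable R : comNzRingType.
Variable I : Type.
Variable V : I -> Type.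
Variable E : forall i : I, V i -> V i -> Prop.
Arguments E : clear implicits.
Variable M : I -> lmodType R.
Variable G : forall i j, ghom (@E i) (@E j) -> {linear M i -> M j}.

Definition is_functor : Prop :=
  (forall i (x : M i), G (ghom_id (@E i)) x = x) /\
  (forall i j k (f : ghom (@E i) (@E j)) (g : ghom (@E j) (@E k)) (x : M i),
      G (ghom_comp g f) x = G g (G f x)).

(* gamma : R[Hom(X,Y)] -> Hom_R(GX,GY), sum r_phi phi |-> sum r_phi G phi,
   is bijective; elements of R[Hom(X,Y)] are finite sums over distinct phi. *)
Definition almost_full : Prop :=
  forall i j,
    (forall h : {linear M i -> M j},
       exists n (phi : 'I_n -> ghom (@E i) (@E j)) (c : 'I_n -> R),
         forall x, h x = \sum_(k < n) c k *: G (phi k) x) /\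
    (forall n (phi : 'I_n -> ghom (@E i) (@E j)) (c : 'I_n -> R),
       injective phi ->
       (forall x, \sum_(k < n) c k *: G (phi k) x = 0) ->
       forall k, c k = 0).

End Functor.

From HB Require Import structures.
From mathcomp Require Import all_boot all_algebra.
From mathcomp Require Import boolp zify ring.
Set Implicit Arguments. Unset Strict Implicit. Unset Printing Implicit Defensive.
Import GRing.Theory.
Local Open Scope ring_scope.

(* Suppose GX and GY are countable but Hom(X, Y) is not.  Enumerate GX.  As GY
   is countable, the restrictions of the maps G phi to finite initial segments
   of GX admit a countable set of representatives psi; choose pairwise distinct
   phi_k outside it and psi_k agreeing with phi_k on the first k elements.  Then
   d_k := G phi_k - G psi_k vanishes on the first k elements, so every formal
   series sum_k a_k d_k is an R-linear map GX -> GY, hence by almost fullness a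
   finite combination of the G phi.  Pick s in S with s not dividing 1 (S is
   reduced) and K such that phi_K is absent from the representation of
   sum_k s^k d_k.  Splitting that series as sum_(k <= K) s^k d_k + s^(K+1) T and
   comparing coefficients of phi_K yields s^K (1 + s c) = 0, so s divides 1,
   because s is regular (S is torsion-free). *)

Lemma uncountable_avoid (H : Type) (L : nat -> H) :
  ~ countable H -> exists h, forall n, L n <> h.
Proof.
move=> H_unc; apply: contrapT => no_h.
have onto h : exists n, L n = h.
  by apply: contrapT => notL; apply: no_h; exists h => n e; apply: notL; exists n.
apply: H_unc; exists (fun h => projT1 (cid (onto h))) => h h' e.
by rewrite -(projT2 (cid (onto h))) -(projT2 (cid (onto h'))) e.
Qed.

Section FreshSequence.
Variables (H : eqType) (L : nat -> H).
Hypothesis H_uncountable : ~ countable H.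

Definition prepend_enum (t : seq H) (n : nat) : H :=
  if (n < size t)%N then nth (L 0) t n else L (n - size t).

Definition fresh_for (t : seq H) : H :=
  projT1 (cid (uncountable_avoid (prepend_enum t) H_uncountable)).

Lemma fresh_forP t : (forall n, L n <> fresh_for t) /\ fresh_for t \notin t.
Proof.
have := projT2 (cid (uncountable_avoid (prepend_enum t) H_uncountable)).
rewrite -/(fresh_for t) /prepend_enum => fresh; split.
  by move=> n; have := fresh (n + size t); rewrite ltnNge leq_addl addnK.
apply/(nthP (L 0)) => -[n lt_n_t]; have := fresh n; rewrite lt_n_t; exact.
Qed.

Fixpoint fresh_prefix (k : nat) : seq H :=
  if k is k'.+1 then rcons (fresh_prefix k') (fresh_for (fresh_prefix k')) else [::].

Definition fresh_seq (k : nat) : H := fresh_for (fresh_prefix k).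

Lemma fresh_prefixE k : fresh_prefix k = map fresh_seq (iota 0 k).
Proof. by elim: k => // k IH; rewrite -[in RHS]addn1 iotaD map_cat -IH cats1. Qed.

Lemma fresh_seq_inj : injective fresh_seq.
Proof.
have neq i j : (i < j)%N -> fresh_seq i != fresh_seq j.
  move=> lt_ij; apply: contraNneq (fresh_forP (fresh_prefix j)).2.
  rewrite -/(fresh_seq j) => <-.
  by rewrite fresh_prefixE map_f // mem_iota.
move=> i j e; case: (ltngtP i j) => // [/neq | /neq]; by rewrite e eqxx.
Qed.

Lemma fresh_seq_avoid k n : L n <> fresh_seq k.
Proof. exact: (fresh_forP _).1. Qed.

End FreshSequence.

Lemma uncountable_injective_avoid (H : eqType) (L : nat -> H) :
  ~ countable H -> exists phi : nat -> H, injective phi /\ forall k n, L n <> phi k.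
Proof.
move=> H_unc; exists (fresh_seq L H_unc).
by split; [exact: fresh_seq_inj | exact: fresh_seq_avoid].
Qed.

Lemma countable_representatives (T : Type) (C : countType) (t0 : T)
    (obs : nat -> T -> C) :
  exists rep : nat -> T, forall k t, exists n, obs k (rep n) = obs k t.
Proof.
pose rep n := if unpickle n is Some (k, c) then
  if pselect (exists t, obs k t = c) is left e then projT1 (cid e) else t0
  else t0.
exists rep => k t; exists (pickle (k, obs k t)); rewrite /rep pickleK.
by case: pselect => [e | []]; [exact: projT2 (cid e) | exists t].
Qed.

Section Restrictions.
Variables (A B : Type) (fA : A -> nat) (fB : B -> nat).
Hypotheses (fA_inj : injective fA) (fB_inj : injective fB).

Definition enum_inv (i : nat) : option A :=
  if pselect (exists a, fA a = i) is left e then Some (projT1 (cid e)) else None.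

Lemma enum_invK : pcancel fA enum_inv.
Proof.
move=> a; rewrite /enum_inv; case: pselect => [e | []]; last by exists a.
by rewrite (fA_inj (projT2 (cid e))).
Qed.

(* A code, in a countable type, of the restriction of [g] to [{a | fA a < k}]. *)
Definition restriction_code (k : nat) (g : A -> B) : seq (option nat) :=
  [seq omap (fB \o g) (enum_inv i) | i <- iota 0 k].

Lemma restriction_code_eq k g g' a : restriction_code k g = restriction_code k g' ->
  (fA a < k)%N -> g a = g' a.
Proof.
move=> /(congr1 (nth None ^~ (fA a))) e lt_a_k; move: e.
by rewrite !(nth_map 0%N) ?size_iota // nth_iota // add0n enum_invK => -[/fB_inj].
Qed.

Lemma countable_restrictions (H : Type) (h0 : H) (g : H -> A -> B) :
  exists rep : nat -> H, forall k h, exists n,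
    forall a, (fA a < k)%N -> g (rep n) a = g h a.
Proof.
have [rep repP] := countable_representatives h0 (fun k h => restriction_code k (g h)).
exists rep => k h; have [n /restriction_code_eq e] := repP k h.
by exists n => a; apply: e.
Qed.

End Restrictions.

Section LocallyFiniteSum.
Variables (R : comNzRingType) (A B : lmodType R) (fA : A -> nat).
Variable d : nat -> {linear A -> B}.
Hypothesis d_vanish : forall k x, (fA x < k)%N -> d k x = 0.

Definition lfsum (a : nat -> R) (x : A) : B := \sum_(k < (fA x).+1) a k *: d k x.

Lemma lfsumE a x N : (fA x < N)%N -> lfsum a x = \sum_(k < N) a k *: d k x.
Proof.
move=> lt_x_N; rewrite /lfsum (big_ord_widen _ (fun k => a k *: d k x) lt_x_N).
rewrite [RHS](bigID (fun k : 'I_N => (k < (fA x).+1)%N)) /= [X in _ + X]big1 ?addr0 //.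
by move=> k; rewrite -leqNgt => /d_vanish ->; rewrite scaler0.
Qed.

Lemma lfsum_is_linear a : linear (lfsum a).
Proof.
move=> r x y; pose N := (fA (r *: x + y) + fA x + fA y).+1.
have [ltN1 ltN2 ltN3] : [/\ fA (r *: x + y) < N, fA x < N & fA y < N]%N.
  by rewrite /N; split; lia.
rewrite (lfsumE _ ltN1) (lfsumE _ ltN2) (lfsumE _ ltN3) scaler_sumr -big_split.
apply: eq_bigr => k _; by rewrite linearP scalerDr !scalerA mulrC.
Qed.

Definition lfsum_linear a : {linear A -> B} :=
  HB.pack (lfsum a) (GRing.isLinear.Build R A B *:%R (lfsum a) (lfsum_is_linear a)).

Lemma lfsum_linearE a x : lfsum_linear a x = lfsum a x.
Proof. by []. Qed.

Lemma lfsum_split m r a b x : (forall k, (k < m)%N -> b k = 0) ->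
    (forall k, (m <= k)%N -> a k = r * b k) ->
  lfsum a x = \sum_(k < m) a k *: d k x + r *: lfsum b x.
Proof.
move=> b_head a_tail; have lt_x_N : (fA x < m + (fA x).+1)%N by rewrite ltn_addl.
rewrite !(lfsumE _ lt_x_N) !big_split_ord /=; congr (_ + _).
rewrite [X in _ *: (X + _)]big1 ?add0r => [|k _]; last by rewrite b_head ?scale0r.
by rewrite scaler_sumr; apply: eq_bigr => k _; rewrite a_tail ?leq_addr // scalerA.
Qed.

End LocallyFiniteSum.

Section FormalCombinations.
Variables (R : comNzRingType) (A B : lmodType R) (H : eqType).
Variable G : H -> {linear A -> B}.

Definition free_family : Prop :=
  forall n (phi : 'I_n -> H) (c : 'I_n -> R), injective phi ->
    (forall x, \sum_(k < n) c k *: G (phi k) x = 0) -> forall k, c k = 0.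

Definition spanning_family : Prop :=
  forall f : {linear A -> B}, exists n (phi : 'I_n -> H) (c : 'I_n -> R),
    forall x, f x = \sum_(k < n) c k *: G (phi k) x.

Definition comb (l : seq (H * R)) (x : A) : B := \sum_(p <- l) p.2 *: G p.1 x.

Definition coef (l : seq (H * R)) (h : H) : R := \sum_(p <- l | p.1 == h) p.2.

Definition scale_comb (r : R) (l : seq (H * R)) : seq (H * R) :=
  [seq (p.1, r * p.2) | p <- l].

Lemma comb_cat l1 l2 x : comb (l1 ++ l2) x = comb l1 x + comb l2 x.
Proof. exact: big_cat. Qed.

Lemma coef_cat l1 l2 h : coef (l1 ++ l2) h = coef l1 h + coef l2 h.
Proof. exact: big_cat. Qed.

Lemma comb_scale r l x : comb (scale_comb r l) x = r *: comb l x.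
Proof. by rewrite /comb big_map scaler_sumr; apply: eq_bigr => p _; rewrite scalerA. Qed.

Lemma coef_scale r l h : coef (scale_comb r l) h = r * coef l h.
Proof. by rewrite /coef big_map mulr_sumr. Qed.

Lemma comb_flatten (ls : seq (seq (H * R))) x :
  comb (flatten ls) x = \sum_(l <- ls) comb l x.
Proof. exact: big_flatten. Qed.

Lemma coef_flatten (ls : seq (seq (H * R))) h :
  coef (flatten ls) h = \sum_(l <- ls) coef l h.
Proof. exact: big_flatten. Qed.

Lemma comb_undup l x :
  comb l x = \sum_(h <- undup (map fst l)) coef l h *: G h x.
Proof.
under [RHS]eq_bigr => h _ do rewrite /coef scaler_suml.
rewrite (exchange_big_dep xpredT) //= /comb; apply: eq_big_seq => p pl.
rewrite -big_filter (@eq_filter _ _ (pred1 p.1)) => [|h]; last exact: eq_sym.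
by rewrite filter_pred1_uniq ?undup_uniq ?mem_undup ?map_f // big_seq1.
Qed.

Lemma spanning_comb : spanning_family ->
  forall f : {linear A -> B}, exists l, forall x, f x = comb l x.
Proof.
move=> G_span f; have [n [phi [c fE]]] := G_span f.
by exists [seq (phi k, c k) | k <- enum 'I_n] => x; rewrite fE /comb big_map big_enum.
Qed.

Lemma free_coef_eq0 : free_family ->
  forall l, (forall x, comb l x = 0) -> forall h, coef l h = 0.
Proof.
move=> G_free l l0 h; set t := in_tuple (undup (map fst l)).
have [/tnthP[k ->] | h_out] := boolP (h \in t); last first.
  apply: big1_seq => p /andP[/eqP ph pl]; case/negP: h_out.
  by rewrite mem_undup -ph map_f.
apply: (G_free _ (tnth t) (fun k => coef l (tnth t k))) => [|x].
  by apply/tuple_uniqP; exact: undup_uniq.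
by rewrite -(big_tuple _ _ t xpredT (fun h => coef l h *: G h x)) -comb_undup.
Qed.

End FormalCombinations.

Section Telescope.
Variables (R : comNzRingType) (A B : lmodType R) (H : eqType).
Variable G : H -> {linear A -> B}.
Hypotheses (G_free : free_family G) (G_span : spanning_family G).
Variables (fA : A -> nat) (phi psi : nat -> H).
Hypotheses (phi_inj : injective phi) (psi_neq_phi : forall j k, psi j <> phi k).
Hypothesis psi_restr : forall k x, (fA x < k)%N -> G (psi k) x = G (phi k) x.
Variable s : R.
Hypotheses (s_lreg : GRing.lreg s) (s_nonunit : ~ in_sR s 1).

Definition diff_map (k : nat) : {linear A -> B} := G (phi k) \- G (psi k).

Lemma diff_map_vanish k x : (fA x < k)%N -> diff_map k x = 0.
Proof. by move=> /psi_restr; rewrite /diff_map /= => ->; rewrite subrr. Qed.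

Definition diff_comb (k : nat) : seq (H * R) := [:: (phi k, 1); (psi k, -1)].

Lemma comb_diff k x : comb G (diff_comb k) x = diff_map k x.
Proof. by rewrite /comb !big_cons big_nil addr0 scale1r scaleN1r. Qed.

Lemma coef_diff k K : coef (diff_comb k) (phi K) = (k == K)%:R.
Proof.
rewrite /coef !big_cons big_nil /= (inj_eq phi_inj).
by case: eqP => // _; rewrite ifN ?addr0 //; apply/eqP; exact: psi_neq_phi.
Qed.

Definition partial_comb (a : nat -> R) (m : nat) : seq (H * R) :=
  flatten [seq scale_comb (a k) (diff_comb k) | k <- index_iota 0 m].

Lemma comb_partial a m x :
  comb G (partial_comb a m) x = \sum_(k < m) a k *: diff_map k x.
Proof.
rewrite comb_flatten big_map big_mkord.
by apply: eq_bigr => k _; rewrite comb_scale comb_diff.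
Qed.

Lemma coef_partial a K : coef (partial_comb a K.+1) (phi K) = a K.
Proof.
rewrite coef_flatten big_map; under eq_bigr => k _ do rewrite coef_scale coef_diff.
rewrite big_nat_recr //= eqxx mulr1 big1_seq ?add0r // => k.
by move=> /andP[_]; rewrite mem_index_iota => /andP[_ lt_k_K]; rewrite ltn_eqF ?mulr0.
Qed.

Lemma coef_phi_eq0 (l : seq (H * R)) : exists K, coef l (phi K) = 0.
Proof.
have [K K_out] : exists K, phi K \notin map fst l.
  apply: contrapT => all_in.
  have uniq_phis : uniq (map phi (iota 0 (size l).+1)).
    by rewrite map_inj_uniq ?iota_uniq.
  have sub_l : {subset map phi (iota 0 (size l).+1) <= map fst l}.
    move=> _ /mapP[K _ ->]; apply: contrapT => K_out.
    by apply: all_in; exists K; apply/negP.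
  by have := uniq_leq_size uniq_phis sub_l; rewrite !size_map size_iota ltnn.
exists K; apply: big1_seq => p /andP[/eqP pK pl]; case/negP: K_out.
by rewrite -pK map_f.
Qed.

Lemma telescope_contradiction : False.
Proof.
have [l l_def] := spanning_comb G_span (lfsum_linear diff_map_vanish (fun k => s ^+ k)).
have [K lK] := coef_phi_eq0 l.
pose b k := if (k < K.+1)%N then 0 else s ^+ (k - K.+1).
have [l' l'_def] := spanning_comb G_span (lfsum_linear diff_map_vanish b).
pose L := l ++ scale_comb (-1) (partial_comb (fun k => s ^+ k) K.+1)
            ++ scale_comb (- s ^+ K.+1) l'.
have L0 x : comb G L x = 0.
  rewrite !comb_cat !comb_scale comb_partial -l_def -l'_def !lfsum_linearE.
  rewrite (lfsum_split diff_map_vanish (m := K.+1) (r := s ^+ K.+1) (b := b)) => [|k|k].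
  - by rewrite scaleN1r scaleNr -opprD subrr.
  - by rewrite /b => ->.
  - by move=> lt_K_k; rewrite /b ltnNge lt_K_k -exprD subnKC.
have := free_coef_eq0 G_free L0 (phi K).
rewrite !coef_cat !coef_scale coef_partial lK add0r; set c := coef l' (phi K).
move=> coef0; have : s ^+ K * (1 + s * c) = s ^+ K * 0.
  by rewrite mulr0 -oppr0 -coef0 exprSr; ring.
move/(lregX s_lreg)/eqP; rewrite addr_eq0 => /eqP s_c.
by apply: s_nonunit; exists (- c); rewrite mulrN.
Qed.

End Telescope.

Lemma free_spanning_family_countable (R : comNzRingType) (A B : lmodType R)
    (H : eqType) (G : H -> {linear A -> B}) (s : R) :
  GRing.lreg s -> ~ in_sR s 1 -> free_family G -> spanning_family G ->
  countable A -> countable B -> countable H.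
Proof.
move=> s_lreg s_nonunit G_free G_span [fA fA_inj] [fB fB_inj].
apply: contrapT => H_unc.
have [h0 _] : exists h : H, True.
  apply: contrapT => H_empty; apply: H_unc; exists (fun=> 0%N) => h.
  by case: H_empty; exists h.
have [rep repP] := countable_restrictions fA_inj fB_inj h0 (fun h => G h).
have [phi [phi_inj phi_fresh]] := uncountable_injective_avoid rep H_unc.
pose psi k := rep (projT1 (cid (repP k (phi k)))).
have psi_restr k x : (fA x < k)%N -> G (psi k) x = G (phi k) x.
  by move=> lt_x_k; rewrite /psi (projT2 (cid (repP k (phi k)))).
apply: (telescope_contradiction G_free G_span phi_inj _ psi_restr s_lreg s_nonunit).
by move=> j k; apply: phi_fresh.
Qed.

Lemma S_reduced_nonunit (R : comNzRingType) (S : R -> Prop) :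
  S_reduced S -> exists2 s, S s & ~ in_sR s 1.
Proof.
move=> S_red; apply: contrapT => all_units.
have := oner_neq0 R; rewrite (S_red 1) ?eqxx // => s Ss.
by apply: contrapT => s_nonunit; apply: all_units; exists s.
Qed.

Lemma S_torsion_free_lreg (R : comNzRingType) (S : R -> Prop) s :
  S_torsion_free S -> S s -> GRing.lreg s.
Proof.
move=> S_tf Ss x y /eqP; rewrite -subr_eq0 -mulrBr => /eqP /(S_tf _ _ Ss) /eqP.
by rewrite subr_eq0 => /eqP.
Qed.

Theorem corollary3p19 (R : comNzRingType) (S : R -> Prop)
  (I : Type) (V : I -> Type) (E : forall i, V i -> V i -> Prop)
  (M : I -> lmodType R)
  (G : forall i j, ghom (E i) (E j) -> {linear M i -> M j}) :
  countable R -> cotorsion_free S ->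
  (forall i, torsion_free_mod (M i)) ->
  is_functor G -> almost_full G ->
  forall X Y, ~ countable (ghom (E X) (E Y)) ->
  ~ countable (M X) \/ ~ countable (M Y).
Proof.
move=> _ [_ [_ [S_red [S_tf _]]]] _ _ G_almost_full X Y Hom_unc.
have [s Ss s_nonunit] := S_reduced_nonunit S_red.
have [G_span G_free] := G_almost_full X Y.
have Hom_countable := @free_spanning_family_countable R (M X) (M Y)
  {classic ghom (E X) (E Y)} (@G X Y) s (S_torsion_free_lreg S_tf Ss) s_nonunit
  G_free G_span.
have [MX_countable | ] := pselect (countable (M X)); last by left.
by right => MY_countable; exact: Hom_unc (Hom_countable MX_countable MY_countable).
Qed.
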